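(* Let $0<\epsilon<1$ and let $\bar b,\bar w>0$ satisfy $b/2\le \bar b\le 2b$ and $w/6\le \bar w\le 6w$. Then the number of butterflies of $G$ all four of whose edges are non-light (with respect to $\bar b,\bar w,\epsilon$) is at most $c_H\epsilon b$, where $c_H=1.77\times 10^4$.
   Context: Let $G=(V,E)$ be a bipartite graph with bipartition $V=U\cup L$ and $m=|E|$ edges; $d_v$ is the degree of vertex $v$, and for an edge $e=(u,v)$ let $d_e=d_u+d_v-2$. A wedge is a path with two edges; $w$ is the number of wedges of $G$. A butterfly is a set $\{u_1,u_2,v_1,v_2\}$ of distinct vertices with $u_1,u_2\in U$, $v_1,v_2\in L$ such that all four pairs $u_iv_j$ are edges; its edges are these four edges. $b$ is the number of butterflies and $b(e)$ the number of butterflies containing edge $e$. Given $\bar b,\bar w,\epsilon>0$, an edge $e$ is heavy if $b(e)>2\bar b^{3/4}/\epsilon^{1/4}$ or $d_e>\bar w/(\epsilon\bar b)^{1/4}$; it is light if $b(e)<\bar b^{3/4}/(2\epsilon^{1/4})$ and $d_e<\bar w/(\epsilon\bar b)^{1/4}$. An edge is non-light if it is not light (an edge may be neither heavy nor light). *)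

From HB Require Import structures.
From mathcomp Require Import all_boot all_order all_algebra.
From mathcomp Require Import all_classical all_reals all_analysis.
Set Implicit Arguments. Unset Strict Implicit. Unset Printing Implicit Defensive.
Import Order.TTheory GRing.Theory Num.Theory.
Local Open Scope ring_scope.

Section Bip.
Variables (U L : finType) (E : U -> L -> bool).

Definition edges : {set U * L} := [set e | E e.1 e.2].
Definition m : nat := #|edges|.

Definition degU (u : U) : nat := #|[set v | E u v]|.
Definition degL (v : L) : nat := #|[set u | E u v]|.

Definition dedge (R : realType) (e : U * L) : R :=
  (degU e.1)%:R + (degL e.2)%:R - 2.

Definition wedges : {set {set U * L}} :=
  [set S : {set U * L} | [&& S \subset edges, #|S| == 2 &
      [exists e1 in S, exists e2 in S,
         (e1 != e2) && ((e1.1 == e2.1) || (e1.2 == e2.2))]]].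
Definition w : nat := #|wedges|.

(* A butterfly {u1,u2,v1,v2}: a 2-subset A of U and a 2-subset B of L with all
   four pairs being edges; its edges are the pairs in A x B. *)
Definition butterflies : {set {set U} * {set L}} :=
  [set AB : {set U} * {set L} | [&& #|AB.1| == 2, #|AB.2| == 2 &
      [forall u in AB.1, forall v in AB.2, E u v]]].
Definition b : nat := #|butterflies|.

Definition bflyE (AB : {set U} * {set L}) : {set U * L} := finset.setX AB.1 AB.2.

Definition b_e (e : U * L) : nat := #|[set AB in butterflies | e \in bflyE AB]|.

Definition heavy (R : realType) (bb ww eps : R) (e : U * L) : bool :=
  ((b_e e)%:R > 2 * bb `^ (3/4) / eps `^ (1/4)) ||
  (dedge R e > ww / (eps * bb) `^ (1/4)).
Definition light (R : realType) (bb ww eps : R) (e : U * L) : bool :=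
  ((b_e e)%:R < bb `^ (3/4) / (2 * eps `^ (1/4))) &&
  (dedge R e < ww / (eps * bb) `^ (1/4)).
Definition nonlight (R : realType) (bb ww eps : R) (e : U * L) : bool :=
  ~~ light bb ww eps e.

Definition nonlight_butterflies (R : realType) (bb ww eps : R) :=
  [set AB in butterflies | [forall e in bflyE AB, nonlight bb ww eps e]].
End Bip.

(* Put x = (eps bb)^(1/4).  A non-light edge has b(e) >= bb / 2x or
   d(e) >= ww / x.  Since the b(e) sum to 4b and the d(e) are at most the
   numbers of wedges through e, which sum to 2w, Markov's inequality leaves at
   most 16x + 12x = 28x non-light edges, and every butterfly built from them
   is determined by an ordered pair of its diagonal edges, so there are at
   most (28x)^2 / 2 of them.  This is 392 x^2 <= 6272 x^4 = 6272 eps bb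
   <= 12544 eps b once x >= 1/4; when x < 1/4 no edge has b(e) >= bb / 2x > b,
   fewer than four edges are non-light, and there is no such butterfly. *)

From mathcomp Require Import all_boot all_order all_algebra.
From mathcomp Require Import all_classical all_reals all_analysis.
From mathcomp Require Import ring lra.
Import Order.TTheory GRing.Theory Num.Theory.
Set Implicit Arguments.
Unset Strict Implicit.
Unset Printing Implicit Defensive.

Lemma sum_card_incident (I T : finType) (F : {set I}) (f : I -> {set T}) k :
  (forall i, i \in F -> #|f i| = k) ->
  \sum_(x : T) #|[set i in F | x \in f i]| = k * #|F|.
Proof.
move=> card_f; under eq_bigr => x _ do rewrite -sum1_card big_mkcond /=.
rewrite exchange_big /= mulnC -sum1_card big_distrl /= [RHS]big_mkcond /=.
apply: eq_bigr => i _; case: (boolP (i \in F)) => [iF | /negbTE iF].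
  rewrite mul1n -(card_f i iF) -sum1_card [RHS]big_mkcond /=.
  by apply: eq_bigr => x _; rewrite inE iF.
by apply: big1 => x _; rewrite inE iF.
Qed.

Lemma leq_mul_card_fibers (T T' : finType) (g : T -> T') (A : {set T})
    (B : {set T'}) k :
  (forall y, y \in B -> k <= #|[set x in A | g x == y]|) -> k * #|B| <= #|A|.
Proof.
move=> fiber_ge; rewrite mulnC -sum1_card big_distrl /=.
apply: leq_trans (_ : \sum_(y in B) #|[set x in A | g x == y]| <= _).
  by apply: leq_sum => y yB; rewrite mul1n fiber_ge.
have -> : \sum_(y in B) #|[set x in A | g x == y]| =
    \sum_(y in B) \sum_(x | (x \in A) && (g x \in B) && (g x == y)) 1.
  apply: eq_bigr => y yB; rewrite -sum1_card; apply: eq_bigl => x.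
  by rewrite inE; case: (g x =P y) => [-> | _]; rewrite ?yB ?andbT ?andbF.
rewrite -(partition_big g (mem B)) /=; last by move=> x /andP[].
rewrite -[X in _ <= X]sum1_card big_mkcond [X in _ <= X]big_mkcond /=.
by apply: leq_sum => x _; case: (x \in A); case: (g x \in B).
Qed.

Section Butterflies.
Variables (U L : finType) (E : U -> L -> bool).

Lemma card_bflyE AB : AB \in butterflies E -> #|bflyE AB| = 4.
Proof. by rewrite inE => /and3P[/eqP A2 /eqP B2 _]; rewrite cardsX A2 B2. Qed.

Lemma bflyE_sub_edges AB : AB \in butterflies E -> bflyE AB \subset edges E.
Proof.
rewrite inE => /and3P[_ _ /forall_inP AB_E]; apply/fintype.subsetP => -[u v].
by rewrite finset.in_setX inE => /andP[/AB_E/forall_inP uE /uE].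
Qed.

Lemma sum_b_e : \sum_e b_e E e = 4 * b E.
Proof. exact: sum_card_incident card_bflyE. Qed.

Lemma b_e_le_b e : b_e E e <= b E.
Proof.
by apply/subset_leq_card/fintype.subsetP => AB; rewrite inE => /andP[].
Qed.

Definition butterflies_in (S : {set U * L}) :=
  [set AB in butterflies E | bflyE AB \subset S].

Lemma card_butterflies_in_gt0 S : 0 < #|butterflies_in S| -> 4 <= #|S|.
Proof.
case/card_gt0P => AB; rewrite inE => /andP[/card_bflyE <-].
exact: subset_leq_card.
Qed.

(* The butterfly {x,y} x {v,v'} is the image of both ((x,v),(y,v')) and
   ((y,v'),(x,v)) under [corners]. *)
Lemma card_butterflies_in S : 2 * #|butterflies_in S| <= #|S| ^ 2.
Proof.
pose corners (p : (U * L) * (U * L)) :=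
  ([set p.1.1; p.2.1], [set p.1.2; p.2.2]).
rewrite -mulnn -cardsX.
apply: (@leq_mul_card_fibers _ _ corners _ _ 2) => -[A B].
rewrite inE => /andP[]; rewrite inE /= => /and3P[/cards2P[x [y [xy ->]]]].
move=> /cards2P[v [v' [vv' ->]]] _ sub_S.
have inS a c : a \in [set x; y] -> c \in [set v; v'] -> (a, c) \in S.
  by move=> aA cB; apply: (fintype.subsetP sub_S); rewrite finset.in_setX aA cB.
apply: leq_trans (_ : #|[set ((x, v), (y, v')); ((y, v'), (x, v))]| <= _).
  by rewrite cards2 !xpair_eqE (negbTE xy).
apply: subset_leq_card; apply/fintype.subsetP => p; rewrite !inE.
by case/orP => /eqP -> /=; rewrite !inS ?inE ?eqxx ?orbT // /corners /=
  ?(finset.setUC [set y]) ?(finset.setUC [set v']).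
Qed.

Definition wedges_at e := [set W in wedges E | e \in W].

Lemma sum_wedges_at : \sum_e #|wedges_at e| = 2 * w E.
Proof.
by apply: (sum_card_incident (f := id)) => W; rewrite inE => /and3P[_ /eqP].
Qed.

Definition starU u := [set f in edges E | f.1 == u].
Definition starL v := [set f in edges E | f.2 == v].

Lemma card_starU u : #|starU u| = degU E u.
Proof.
rewrite -(card_in_imset (f := snd)) => [|[u1 v1] [u2 v2]]; last first.
  by rewrite !inE /= => /andP[_ /eqP ->] /andP[_ /eqP ->] ->.
apply: eq_card => v; rewrite !inE; apply/imsetP/idP => [[f]|uv].
  by rewrite !inE => /andP[fE /eqP <-] ->.
by exists (u, v); rewrite // !inE uv eqxx.
Qed.

Lemma card_starL v : #|starL v| = degL E v.
Proof.
rewrite -(card_in_imset (f := fst)) => [|[u1 v1] [u2 v2]]; last first.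
  by rewrite !inE /= => /andP[_ /eqP ->] /andP[_ /eqP ->] ->.
apply: eq_card => u; rewrite !inE; apply/imsetP/idP => [[f]|uv].
  by rewrite !inE => /andP[fE /eqP <-] ->.
by exists (u, v); rewrite // !inE uv eqxx.
Qed.

Definition adjacent_edges e := (starU e.1 :|: starL e.2) :\ e.

Lemma card_adjacent_edges e : e \in edges E ->
  degU E e.1 + degL E e.2 = #|adjacent_edges e| + 2.
Proof.
case: e => u0 v0; rewrite inE /= => eE.
have cap : starU u0 :&: starL v0 = [set (u0, v0)].
  apply/finset.setP => -[u v]; rewrite !inE xpair_eqE /=.
  by case: eqP => [-> | _]; case: eqP => [-> | _]; rewrite ?andbF ?eE.
rewrite -card_starU -card_starL -cardsUI cap cards1 (cardsD1 (u0, v0)).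
rewrite !inE eE /=.
by rewrite eqxx add1n addn1 addn2.
Qed.

Lemma wedge_adjacent_edges e f : e \in edges E -> f \in adjacent_edges e ->
  [set e; f] \in wedges_at e.
Proof.
move=> eE /setD1P[fe fstar].
have /andP[fE shared] : (f \in edges E) && ((f.1 == e.1) || (f.2 == e.2)).
  by move: fstar; rewrite !inE => /orP[] /andP[-> ->]; rewrite ?orbT.
rewrite !inE eqxx andbT; apply/and3P; split.
- by apply/fintype.subsetP => g /set2P[] ->.
- by rewrite finset.cards2 (eq_sym e) fe.
apply/fintype.existsP; exists e; rewrite !inE eqxx /=.
apply/fintype.existsP; exists f; rewrite !inE eqxx orbT eq_sym fe /=.
by rewrite eq_sym [e.2 == _]eq_sym.
Qed.

Lemma card_adjacent_edges_le e : e \in edges E ->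
  #|adjacent_edges e| <= #|wedges_at e|.
Proof.
move=> eE; rewrite -(card_in_imset (f := fun f => [set e; f])).
  apply/subset_leq_card/fintype.subsetP => _ /imsetP[f fe ->].
  exact: wedge_adjacent_edges.
move=> f1 f2; rewrite !inE => /andP[f1e _] /andP[f2e _] f12.
have : f1 \in [set e; f2] by rewrite -f12 !inE eqxx orbT.
by rewrite !inE (negbTE f1e) => /eqP.
Qed.

End Butterflies.

Local Open Scope ring_scope.

Lemma card_ge_mulr_le_sum (R : numDomainType) (T : finType) (A : {pred T})
    (f : T -> nat) (t : R) :
  #|[set x in A | t <= (f x)%:R]|%:R * t <= (\sum_x f x)%:R.
Proof.
rewrite mulr_natl -sumr_const natr_sum.
apply: le_trans (_ : \sum_(x in [set x in A | t <= (f x)%:R]) (f x)%:R <= _).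
  by apply: ler_sum => x; rewrite inE => /andP[].
rewrite big_mkcond /=; apply: ler_sum => x _.
by case: (_ \in _).
Qed.

Lemma dedge_le_wedges_at (R : realType) (U L : finType) (E : U -> L -> bool) e :
  e \in edges E -> dedge E R e <= #|wedges_at E e|%:R.
Proof.
move=> eE; rewrite /dedge -natrD card_adjacent_edges // natrD addrK ler_nat.
exact: card_adjacent_edges_le.
Qed.

Lemma powR_invnK (R : realType) (a : R) n : 0 <= a -> (0 < n)%N ->
  (a `^ n%:R^-1) ^+ n = a.
Proof.
move=> a_ge0 n_gt0; rewrite -powR_mulrn ?powR_ge0 // -powRrM mulVf ?powRr1 //.
by rewrite pnatr_eq0 -lt0n.
Qed.

Lemma powR34_div_powR14 (R : realType) (a c : R) : 0 < a -> 0 < c ->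
  a `^ (3/4) / (2 * c `^ (1/4)) = a / (2 * (c * a) `^ (1/4)).
Proof.
move=> a_gt0 c_gt0; rewrite powRM ?ltW //.
have a34_a14 : a `^ (3/4) * a `^ (1/4) = a.
  rewrite -powRD ?gt_eqF ?implybT // (_ : 3/4 + 1/4 = 1) ?powRr1 ?ltW //.
  by field.
have := powR_gt0 (1/4) a_gt0; have := powR_gt0 (1/4) c_gt0.
by rewrite -{3}a34_a14 => ? ?; field; rewrite ?gt_eqF.
Qed.

Section NonlightEdges.
Variables (R : realType) (U L : finType) (E : U -> L -> bool) (eps bb ww : R).
Hypotheses (eps_gt0 : 0 < eps) (bb_gt0 : 0 < bb) (ww_gt0 : 0 < ww).

Let x := (eps * bb) `^ (1/4).
Let x_gt0 : 0 < x. Proof. by rewrite powR_gt0 ?mulr_gt0. Qed.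

Let bfly_heavy := [set e in edges E | bb / (2 * x) <= (b_e E e)%:R].
Let wedge_heavy := [set e in edges E | ww / x <= #|wedges_at E e|%:R].
Let nonlight_edges := [set e in edges E | nonlight E bb ww eps e].

Lemma nonlight_edges_sub : nonlight_edges \subset bfly_heavy :|: wedge_heavy.
Proof.
apply/fintype.subsetP => e; rewrite !inE /nonlight /light negb_and -!leNgt.
rewrite powR34_div_powR14 // => /andP[eE /orP[b_heavy | d_heavy]].
  by rewrite eE b_heavy.
by rewrite eE (le_trans d_heavy (dedge_le_wedges_at _ _)) ?orbT ?inE.
Qed.

Hypothesis b_le : (b E)%:R / 2 <= bb.

Lemma card_bfly_heavy : #|bfly_heavy|%:R <= 16 * x.
Proof.
have := card_ge_mulr_le_sum (edges E) (b_e E) (bb / (2 * x)).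
rewrite sum_b_e natrM mulrA ler_pdivrMr ?mulr_gt0 // => markov.
have bx : (b E)%:R * x <= 2 * bb * x by rewrite ler_pM2r //; have := b_le; lra.
by rewrite -(ler_pM2r bb_gt0) /bfly_heavy; lra.
Qed.

Lemma bfly_heavy_eq0 : x < 1/4 -> bfly_heavy = finset.set0.
Proof.
move=> x_lt; apply/finset.setP => e; rewrite !inE.
suff be_lt : (b_e E e)%:R < bb / (2 * x) by rewrite leNgt be_lt andbF.
rewrite ltr_pdivlMr ?mulr_gt0 //.
have := b_e_le_b E e; rewrite -(ler_nat R) => be_le.
by have := b_le; have := x_gt0; have := bb_gt0; nra.
Qed.

Hypothesis w_le : (w E)%:R / 6 <= ww.

Lemma card_wedge_heavy : #|wedge_heavy|%:R <= 12 * x.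
Proof.
have := card_ge_mulr_le_sum (edges E) (fun e => #|wedges_at E e|) (ww / x).
rewrite sum_wedges_at natrM mulrA ler_pdivrMr // => markov.
have wx : (w E)%:R * x <= 6 * ww * x by rewrite ler_pM2r //; have := w_le; lra.
by rewrite -(ler_pM2r ww_gt0) /wedge_heavy; lra.
Qed.

Lemma card_nonlight_edges : #|nonlight_edges|%:R <= 28 * x.
Proof.
apply: le_trans (_ : #|bfly_heavy|%:R + #|wedge_heavy|%:R <= _).
  by rewrite -natrD ler_nat (leq_trans (subset_leq_card nonlight_edges_sub))
    ?leq_card_setU.
by have := card_bfly_heavy; have := card_wedge_heavy; lra.
Qed.

Lemma card_nonlight_edges_small : x < 1/4 -> (#|nonlight_edges| < 4)%N.
Proof.
move=> x_lt; rewrite -(ltr_nat R).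
apply: le_lt_trans (_ : 12 * x < _); last by lra.
apply: le_trans card_wedge_heavy; rewrite ler_nat.
rewrite (leq_trans (subset_leq_card nonlight_edges_sub)) // bfly_heavy_eq0 //.
by rewrite finset.set0U.
Qed.

End NonlightEdges.

Lemma nonlight_butterfliesE (R : realType) (U L : finType) (E : U -> L -> bool)
    (bb ww eps : R) :
  nonlight_butterflies E bb ww eps =
  butterflies_in E [set e in edges E | nonlight E bb ww eps e].
Proof.
apply/finset.setP => AB; apply/setIdP/setIdP => -[AB_b AB_nl]; split => //.
  apply/fintype.subsetP => e eAB; apply/setIdP; split.
    exact: (fintype.subsetP (bflyE_sub_edges AB_b)).
  exact: (forall_inP AB_nl).
by apply/forall_inP => e /(fintype.subsetP AB_nl) /setIdP[].
Qed.

Theorem proposition1 (R : realType) (U L : finType) (E : U -> L -> bool)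
  (eps bb ww : R) :
  0 < eps -> eps < 1 -> 0 < bb -> 0 < ww ->
  (b E)%:R / 2 <= bb -> bb <= 2 * (b E)%:R ->
  (w E)%:R / 6 <= ww -> ww <= 6 * (w E)%:R ->
  (#|nonlight_butterflies E bb ww eps|)%:R <= 17700 * eps * (b E)%:R.
Proof.
move=> eps_gt0 _ bb_gt0 ww_gt0 b_le bb_le w_le _.
rewrite nonlight_butterfliesE.
set S := [set e in edges E | _]; set x := (eps * bb) `^ (1/4).
have x_gt0 : 0 < x by rewrite powR_gt0 ?mulr_gt0.
have x4 : x ^+ 4 = eps * bb by rewrite /x div1r powR_invnK ?mulr_ge0 ?ltW.
have [->|K_gt0] := posnP #|butterflies_in E S|.
  by rewrite !mulr_ge0 ?ler0n ?ltW.
have x_ge : 1/4 <= x.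
  rewrite leNgt; apply: contraL (card_butterflies_in_gt0 K_gt0) => x_lt.
  by rewrite -ltnNge (card_nonlight_edges_small eps_gt0 bb_gt0 ww_gt0 b_le).
have S_le : #|S|%:R <= 28 * x :=
  card_nonlight_edges eps_gt0 bb_gt0 ww_gt0 b_le w_le.
have := card_butterflies_in E S; rewrite -(ler_nat R) natrM natrX => K_le.
have S2_le : #|S|%:R ^+ 2 <= 784 * x ^+ 2 by have := ler0n R #|S|; nra.
have x2_le : x ^+ 2 <= 16 * x ^+ 4.
  have : 1 <= 16 * x ^+ 2 by nra.
  by have := sqr_ge0 x; nra.
nra.
Qed.
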